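(* Let $k\ge1$, let $(T,o)$ be a valid finite rooted tree, and let $D$ be a signed incidence matrix of $T$, i.e. the real $V(T)\times U(T)$ matrix with $D_{v,u}\in\{1,-1\}$ if $vu$ is an edge of $T$ and $D_{v,u}=0$ otherwise. Let $V(T)=K\uplus J$ be a partition with $m(K,T)>0$ and let $v_0\in J$. Then there exists $\varphi\in\mathbb R^{V(T)}$ such that (i) $\varphi^TD=0$, (ii) $\varphi(v_0)=1$, and (iii) \[\sum_{v\in J}\varphi(v)^2=\frac{m(K,T)}{m(K,T)-m(K\cup\{v_0\},T)}.\]
   Context: Trees. For a finite rooted tree $(T,o)$, the height of a vertex is its distance from $o$ and the height of $T$ is the maximal height of a vertex. Vertices of even (odd) height are called even (odd); $V(T)$ and $U(T)$ denote the sets of even and odd vertices. $(T,o)$ is valid if its height is even and every odd vertex has degree exactly $k+1$ in $T$. For $K\subset V(T)$, $m(K,T)$ is the number of matchings of $T$ in which every vertex of $K\cup U(T)$ is saturated (the denominator in (iii) is positive). *)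

From mathcomp Require Import all_boot all_order all_algebra.
From mathcomp Require Import reals.
Set Implicit Arguments. Unset Strict Implicit. Unset Printing Implicit Defensive.
Import Order.TTheory GRing.Theory Num.Theory.

Section Trees.
Variable T : finType.
Variable e : rel T.

Definition simple_graph := symmetric e /\ irreflexive e.

Definition acyclic := forall c : seq T, uniq c -> 2 < size c -> ~~ cycle e c.

Definition is_tree := simple_graph /\ (forall x y, connect e x y) /\ acyclic.

Fixpoint ball (n : nat) (x : T) : {set T} :=
  match n with
  | 0 => [set x]
  | n'.+1 => ball n' x :|: [set y | [exists z in ball n' x, e z y]]
  end.

(* graph distance from x to y (for connected graphs): least n with y in ball n x *)
Definition dist (x y : T) : nat := find (fun n => y \in ball n x) (iota 0 #|T|).

Definition height (o v : T) : nat := dist o v.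
Definition tree_height (o : T) : nat := \max_(v : T) height o v.
Definition even_vertices (o : T) : {set T} := [set v | ~~ odd (height o v)].
Definition odd_vertices (o : T) : {set T} := [set v | odd (height o v)].

Definition degree (v : T) : nat := #|[set w | e v w]|.

Definition valid (k : nat) (o : T) :=
  ~~ odd (tree_height o) /\ forall u, u \in odd_vertices o -> degree u = k.+1.

(* A matching is represented by the symmetric set of ordered pairs (x,y)
   with xy a matching edge; each vertex has at most one partner. *)
Definition is_matching (M : {set T * T}) : bool :=
  [forall p in M, e p.1 p.2 && ((p.2, p.1) \in M)] &&
  [forall x, forall y, forall z, ((x, y) \in M) && ((x, z) \in M) ==> (y == z)].

Definition saturates (M : {set T * T}) (x : T) : bool := [exists y, (x, y) \in M].

(* m(K,T): number of matchings saturating every vertex of K ∪ U(T) *)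
Definition m_count (o : T) (K : {set T}) : nat :=
  #|[set M : {set T * T} | is_matching M &&
        [forall x in K :|: odd_vertices o, saturates M x]]|.

End Trees.

From mathcomp Require Import all_boot all_order all_algebra.
From mathcomp Require Import reals.
From mathcomp Require Import zify ring.
Set Implicit Arguments. Unset Strict Implicit. Unset Printing Implicit Defensive.
Import Order.TTheory GRing.Theory Num.Theory.

(* Root the tree at v0 and call a matching good if it saturates K and every odd
   vertex, so that m(K,T) - m(K+v0,T) counts the good matchings leaving v0 free.
   For even v let N(v) be the set of good matchings leaving v0 free that match
   every odd vertex of the path from v0 to v to its successor on the path, and
   put phi(v) = +-|N(v)| / |N(v0)|.  An odd vertex u is matched to one of its
   children, so N(parent u) splits over the children of u; with suitable signs
   this gives phi^T D = 0.  Flipping the path from v0 to v is a bijection between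
   N(v) and the good matchings that match the odd path vertices to their
   predecessors and leave v free, and a good matching together with a good
   matching leaving v0 free determines exactly one such v (the end of their
   longest common alternating path); hence sum_J |N(v)|^2 = m(K,T) |N(v0)|. *)

Section Distance.
Variables (T : finType) (e : rel T) (r : T).
Hypothesis e_connected : forall x y, connect e x y.

Local Notation dr := (dist e r).

Lemma in_ballS n y :
  (y \in ball e n.+1 r) = (y \in ball e n r) || [exists z in ball e n r, e z y].
Proof. by rewrite /= in_setU in_set. Qed.

Lemma ball_path p x n :
  x \in ball e n r -> path e x p -> last x p \in ball e (n + size p) r.
Proof.
elim: p x n => [|z p IH] x n /=; first by rewrite addn0.
move=> Hx /andP[exz Hp]; rewrite addnS -addSn; apply: IH Hp.
by rewrite in_ballS; apply/orP; right; apply/existsP; exists x; rewrite Hx.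
Qed.

Lemma ball_reach y : exists2 n, n < #|T| & y \in ball e n r.
Proof.
have /connectP[p Hp ->] := e_connected r y.
have [p' Hp' Hu _] := shortenP Hp.
exists (size p').
  by have := max_card (mem (r :: p')); rewrite (card_uniqP Hu).
by rewrite -(add0n (size p')); apply: ball_path; rewrite ?in_set1.
Qed.

Lemma dist_lt_card y : dr y < #|T|.
Proof.
have [n Hn Hb] := ball_reach y.
rewrite /dist -[X in _ < X](size_iota 0 #|T|) -has_find.
by apply/hasP; exists n; rewrite ?mem_iota.
Qed.

Lemma dist_ball y : y \in ball e (dr y) r.
Proof.
have := @nth_find _ 0 (fun n => y \in ball e n r) (iota 0 #|T|).
rewrite -/(dist e r y) nth_iota ?dist_lt_card // add0n; apply.
by rewrite has_find size_iota dist_lt_card.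
Qed.

Lemma dist_min y n : y \in ball e n r -> dr y <= n.
Proof.
move=> Hb; have [Hn|Hn] := ltnP n #|T|; last exact: leq_trans (ltnW (dist_lt_card y)) Hn.
rewrite leqNgt; apply/negP => Hlt.
have := @before_find _ 0 (fun n => y \in ball e n r) (iota 0 #|T|) n.
by rewrite -/(dist e r y) nth_iota // add0n Hb => /(_ Hlt).
Qed.

Lemma dist_eq0 y : (dr y == 0) = (y == r).
Proof.
apply/idP/idP => [/eqP H|/eqP->]; first by have := dist_ball y; rewrite H in_set1.
by rewrite -leqn0 dist_min // in_set1.
Qed.

Lemma dist_edge x y : e x y -> dr y <= (dr x).+1.
Proof.
move=> exy; apply: dist_min; rewrite in_ballS; apply/orP; right.
by apply/existsP; exists x; rewrite dist_ball.
Qed.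

Lemma dist_pred y : y != r -> exists2 z, e z y & (dr z).+1 = dr y.
Proof.
rewrite -dist_eq0; have := dist_ball y; case Ed: (dr y) => [|n] //= + _.
rewrite in_ballS => /orP[Hn|/existsP[z /andP[Hz ez]]].
  by move: (dist_min Hn); rewrite Ed ltnn.
exists z => //; apply/eqP; rewrite eqn_leq -Ed dist_edge // andbT.
by rewrite Ed ltnS dist_min.
Qed.

End Distance.

Lemma card_partition_sum (X Y : finType) (A : {set X}) (I : {set Y}) (f : Y -> pred X) :
  (forall x, x \in A -> \sum_(y in I) (f y x : nat) = 1) ->
  #|A| = \sum_(y in I) #|[set x in A | f y x]|.
Proof.
move=> H; rewrite -sum1_card (eq_bigr (fun x => \sum_(y in I) (f y x : nat))); last first.
  by move=> x /H ->.
rewrite exchange_big /=; apply: eq_bigr => y _.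
by rewrite -sum1dep_card big_mkcondr /=; apply: eq_bigr => x _; case: (f y x).
Qed.

Lemma sum_indicator_unique (Y : finType) (I : {set Y}) (f : pred Y) y0 :
  y0 \in I -> f y0 -> (forall y, y \in I -> f y -> y = y0) ->
  \sum_(y in I) (f y : nat) = 1.
Proof.
move=> H0 H1 H2; rewrite (bigD1 y0) //= H1 big1 // => y /andP[Hy Hne].
by case Hf: (f y) => //; move: Hne; rewrite (H2 y Hy Hf) eqxx.
Qed.

Section Matching.
Variables (T : finType) (e : rel T).

Lemma is_matchingP (M : {set T * T}) :
  reflect [/\ forall x y, (x, y) \in M -> e x y,
              forall x y, (x, y) \in M -> (y, x) \in M &
              forall x y z, (x, y) \in M -> (x, z) \in M -> y = z]
          (is_matching e M).
Proof.
apply: (iffP andP) => [[/forallP H1 /forallP H2]|[H1 H2 H3]]; split.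
- by move=> x y /(implyP (H1 (x, y))) /andP[].
- by move=> x y /(implyP (H1 (x, y))) /andP[].
- move=> x y z Hy Hz; apply/eqP.
  by move: (H2 x) => /forallP /(_ y) /forallP /(_ z); rewrite Hy Hz.
- by apply/forallP => -[x y]; apply/implyP => /= Hxy; rewrite H1 // H2.
- apply/forallP => x; apply/forallP => y; apply/forallP => z.
  by apply/implyP => /andP[Hy Hz]; rewrite (H3 _ _ _ Hy Hz).
Qed.

Variable M : {set T * T}.
Hypothesis M_matching : is_matching e M.

Lemma matching_edge x y : (x, y) \in M -> e x y.
Proof. by case/is_matchingP: M_matching => H _ _; apply: H. Qed.

Lemma matching_sym x y : (x, y) \in M -> (y, x) \in M.
Proof. by case/is_matchingP: M_matching => _ H _; apply: H. Qed.

Lemma matching_uniq x y z : (x, y) \in M -> (x, z) \in M -> y = z.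
Proof. by case/is_matchingP: M_matching => _ _ H; apply: H. Qed.

Lemma matching_uniqr x y z : (y, x) \in M -> (z, x) \in M -> y = z.
Proof. by move=> /matching_sym H1 /matching_sym H2; apply: matching_uniq H1 H2. Qed.

End Matching.

Lemma saturatesP (T : finType) (M : {set T * T}) x :
  reflect (exists y, (x, y) \in M) (saturates M x).
Proof. exact: existsP. Qed.

Section Tree.
Variables (T : finType) (e : rel T).
Hypothesis e_tree : is_tree e.

Let e_sym : symmetric e. Proof. by case: e_tree => [[]]. Qed.
Let e_irr : irreflexive e. Proof. by case: e_tree => [[]]. Qed.
Let e_connected : forall x y, connect e x y. Proof. by case: e_tree => _ []. Qed.
Let e_acyclic : acyclic e. Proof. by case: e_tree => _ []. Qed.

Section Root.
Context {r : T}.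

Local Notation dr := (dist e r).

Let dr_eq0 x : (dr x == 0) = (x == r). Proof. exact: dist_eq0. Qed.

Definition parent x :=
  if [pick z | e z x && ((dr z).+1 == dr x)] is Some z then z else r.

Lemma dist_root : dr r = 0.
Proof. by apply/eqP; rewrite dr_eq0. Qed.

Lemma parent_spec x : x != r -> e (parent x) x /\ (dr (parent x)).+1 = dr x.
Proof.
move=> Hx; rewrite /parent; case: pickP => [z /andP[-> /eqP->] //|H].
have [z ez Hz] := dist_pred e_connected Hx.
by move: (H z); rewrite ez Hz eqxx.
Qed.

Lemma parent_root : parent r = r.
Proof. by rewrite /parent; case: pickP => [z /andP[_]|//]; rewrite dist_root. Qed.

Lemma dist_parent x : dr (parent x) = (dr x).-1.
Proof.
have [->|Hx] := eqVneq x r; first by rewrite parent_root dist_root.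
by have [_ <-] := parent_spec Hx.
Qed.

Lemma dist_parentS x : x != r -> dr x = (dr (parent x)).+1.
Proof. by rewrite -dr_eq0 dist_parent; case: (dr x). Qed.

Lemma dist_iter_parent i x : dr (iter i parent x) = dr x - i.
Proof. by elim: i => [|i IH]; rewrite ?subn0 //= dist_parent IH subnS. Qed.

Lemma iter_parent_dist x : iter (dr x) parent x = r.
Proof. by apply/eqP; rewrite -dr_eq0 dist_iter_parent subnn. Qed.

Lemma edge_parent x : x != r -> e x (parent x).
Proof. by move=> /parent_spec[H _]; rewrite e_sym. Qed.

Lemma path_iter_parent x m n : m + n <= dr x ->
  path e (iter m parent x) [seq iter i parent x | i <- iota m.+1 n].
Proof.
elim: n m => [|n IH] m //= Hn; apply/andP; split; last by apply: IH; rewrite addSnnS.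
apply: edge_parent; rewrite -dr_eq0 dist_iter_parent; lia.
Qed.

Lemma last_iter_parent x m n :
  last (iter m parent x) [seq iter i parent x | i <- iota m.+1 n] = iter (m + n) parent x.
Proof.
by elim: n m => [|n IH] m /=; rewrite ?addn0 // -/(iter m.+1 parent x) IH addSnnS.
Qed.

Lemma path_iter_parent_rev x n : n <= dr x ->
  path e (iter n parent x) [seq iter i parent x | i <- rev (iota 0 n)].
Proof.
elim: n => [|n IH] // Hn; rewrite -addn1 iotaD rev_cat /= add0n addn1.
rewrite IH ?(ltnW Hn) // andbT e_sym edge_parent //.
by rewrite -dr_eq0 dist_iter_parent; lia.
Qed.

Lemma uniq_iter_parent x n : n <= (dr x).+1 -> uniq [seq iter i parent x | i <- iota 0 n].
Proof.
move=> Hn; rewrite map_inj_in_uniq ?iota_uniq // => i j; rewrite !mem_iota !add0n.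
by move=> Hi Hj /(congr1 dr); rewrite !dist_iter_parent; lia.
Qed.

Lemma first_common_ancestor a b : a != b -> dr a = dr b ->
  exists n, [/\ 0 < n, n <= dr a, iter n parent a = iter n parent b &
                forall i, iter i parent a = iter i parent b -> n <= i].
Proof.
move=> Hab Hd.
have Hex : exists i, iter i parent a == iter i parent b.
  by exists (dr a); rewrite {2}Hd !iter_parent_dist.
case: (ex_minnP Hex) => n /eqP Hn Hmin; exists n; split => //.
- by rewrite lt0n; apply: contra_neq Hab => Hn0; rewrite Hn0 in Hn.
- by apply: Hmin; rewrite {2}Hd !iter_parent_dist.
- by move=> i /eqP /Hmin.
Qed.

(* The path closes a cycle with the two paths up to the first common ancestor. *)
Lemma same_depth_no_deeper_path a b q : a != b -> dr a = dr b ->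
  path e b (rcons q a) -> uniq q -> all (fun y => dr a < dr y) q -> False.
Proof.
move=> Hab Hd Hp Hq Hqd.
have [n [Hn0 Hna Hn Hmin]] := first_common_ancestor Hab Hd.
pose LA := [seq iter i parent a | i <- iota 0 n.+1].
pose LB := [seq iter i parent b | i <- iota 0 n].
have dist_LA y : y \in LA -> exists2 i, i <= n & y = iter i parent a.
  by move=> /mapP[i]; rewrite mem_iota add0n ltnS => Hi ->; exists i.
have dist_LB y : y \in LB -> exists2 i, i < n & y = iter i parent b.
  by move=> /mapP[i]; rewrite mem_iota add0n => Hi ->; exists i.
have Hu : uniq (LA ++ rev LB ++ q).
  rewrite cat_uniq [uniq (rev LB ++ q)]cat_uniq rev_uniq Hq andbT.
  apply/and4P; split.
  + exact: uniq_iter_parent.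
  + apply/hasPn => y Hy; apply/negP => /dist_LA[i Hi Ey].
    move: Hy; rewrite mem_cat mem_rev => /orP[/dist_LB[j Hj Ey']|Hyq].
      have Eij : i = j by move: (congr1 dr Ey'); rewrite Ey !dist_iter_parent; lia.
      by move: (Hmin i); rewrite -Ey Eij -Ey' => /(_ erefl); lia.
    by move: Hqd => /allP /(_ y Hyq); rewrite Ey dist_iter_parent; lia.
  + by apply: uniq_iter_parent; rewrite -Hd ltnW.
  + apply/hasPn => y Hyq; apply/negP; rewrite mem_rev => /dist_LB[i Hi Ey].
    by move: Hqd => /allP /(_ y Hyq); rewrite Ey dist_iter_parent; lia.
have Hs : 2 < size (LA ++ rev LB ++ q).
  by rewrite !size_cat size_rev !size_map !size_iota; lia.
suff Hc : cycle e (LA ++ rev LB ++ q) by move: (e_acyclic Hu Hs); rewrite Hc.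
rewrite /LA /= rcons_cat cat_path (path_iter_parent (m := 0)) ?add0n //=.
rewrite (last_iter_parent a 0 n) add0n Hn rcons_cat cat_path.
rewrite /LB -map_rev path_iter_parent_rev -?Hd //=.
have -> : last (iter n parent b) [seq iter i parent b | i <- rev (iota 0 n)] = b.
  by case: n Hn0 {Hna Hn Hmin dist_LA dist_LB LA LB Hu Hs} => // n _;
     rewrite /= rev_cons map_rcons last_rcons.
exact: Hp.
Qed.

Lemma tree_edge_parent x y : e x y -> (y == parent x) || (x == parent y).
Proof.
move=> exy.
have H1 : dr y <= (dr x).+1 by apply: dist_edge.
have H2 : dr x <= (dr y).+1 by apply: dist_edge => //; rewrite e_sym.
have [Hlt|Hgt|Heq] := ltngtP (dr x) (dr y).
- have Hy : y != r by rewrite -dr_eq0 -lt0n (leq_ltn_trans _ Hlt).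
  have [ez Hz] := parent_spec Hy.
  case: (eqVneq x (parent y)) => [->|Hne]; first by apply/orP; right.
  exfalso; apply: (@same_depth_no_deeper_path x (parent y) [:: y]) => //=.
  + lia.
  + by rewrite ez e_sym exy.
  + by rewrite andbT; lia.
- have Hx : x != r by rewrite -dr_eq0 -lt0n (leq_ltn_trans _ Hgt).
  have [ez Hz] := parent_spec Hx.
  case: (eqVneq y (parent x)) => [->|Hne]; first by apply/orP; left.
  exfalso; apply: (@same_depth_no_deeper_path y (parent x) [:: x]) => //=.
  + lia.
  + by rewrite ez exy.
  + by rewrite andbT; lia.
- exfalso; apply: (@same_depth_no_deeper_path x y [::]) => //=.
  + by apply: contraTneq exy => ->; rewrite e_irr.
  + by rewrite e_sym exy.
Qed.

Lemma odd_dist_edge x y : e x y -> odd (dr x) = ~~ odd (dr y).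
Proof.
move=> exy; case/orP: (tree_edge_parent exy) => /eqP E.
- have Hx : x != r by apply: contraTneq exy => Ex; rewrite E Ex parent_root e_irr.
  by rewrite E (dist_parentS Hx).
- have Hy : y != r by apply: contraTneq exy => Ey; rewrite E Ey parent_root e_irr.
  by rewrite E (dist_parentS Hy) /= negbK.
Qed.

Definition ancestor x y := iter (dr y - dr x) parent y == x.

Lemma ancestor_refl y : ancestor y y.
Proof. by rewrite /ancestor subnn. Qed.

Lemma ancestor_dist x y : ancestor x y -> dr x <= dr y.
Proof. by move=> /eqP/(congr1 dr); rewrite dist_iter_parent; lia. Qed.

Lemma ancestor_iter i y : ancestor (iter i parent y) y.
Proof.
rewrite /ancestor dist_iter_parent; have [Hi|Hi] := leqP i (dr y).
  by rewrite subKn.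
have -> : dr y - (dr y - i) = dr y by lia.
rewrite iter_parent_dist -(subnK (ltnW Hi)) iterD iter_parent_dist.
by elim: (i - dr y) => //= j /eqP <-; rewrite parent_root.
Qed.

Lemma ancestor_parent_self x : ancestor (parent x) x.
Proof. exact: (ancestor_iter 1). Qed.

Lemma ancestor_root y : ancestor r y.
Proof. by rewrite -{1}(iter_parent_dist y) ancestor_iter. Qed.

Lemma ancestor_rootr x : ancestor x r -> x = r.
Proof. by move=> /ancestor_dist; rewrite dist_root leqn0 dr_eq0 => /eqP. Qed.

Lemma ancestor_eq x x' y : ancestor x y -> ancestor x' y -> dr x = dr x' -> x = x'.
Proof. by rewrite /ancestor => /eqP H1 /eqP H2 Hd; rewrite -H1 -H2 Hd. Qed.

Lemma ancestor_trans x y z : ancestor x y -> ancestor y z -> ancestor x z.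
Proof.
move=> Hxy Hyz; have Hd1 := ancestor_dist Hxy; have Hd2 := ancestor_dist Hyz.
move: Hxy Hyz; rewrite /ancestor => /eqP H1 /eqP H2.
have -> : dr z - dr x = (dr y - dr x) + (dr z - dr y) by lia.
by rewrite iterD H2 H1.
Qed.

Lemma ancestor_parent x y : ancestor x y -> x != y -> ancestor x (parent y).
Proof.
rewrite /ancestor => /eqP H Hne; have Hd := congr1 dr H; rewrite dist_iter_parent in Hd.
have Hlt : dr x < dr y.
  rewrite ltn_neqAle (_ : dr x <= dr y) ?andbT; last by lia.
  by apply: contra_neq Hne => Exy; rewrite -H Exy subnn.
rewrite dist_parent -iterSr; have -> : ((dr y).-1 - dr x).+1 = dr y - dr x by lia.
by rewrite H.
Qed.

Lemma ancestor_parentr x y : ancestor x (parent y) -> ancestor x y.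
Proof.
have [->|Hy] := eqVneq y r; first by rewrite parent_root.
rewrite /ancestor dist_parent => /eqP H; have := congr1 dr H.
rewrite dist_iter_parent dist_parent => Hd.
have Hy0 : 0 < dr y by rewrite lt0n dr_eq0.
apply/eqP; rewrite -[RHS]H -iterSr; congr iter; lia.
Qed.

Lemma ancestorE x c : c != r -> ancestor x c = (x == c) || ancestor x (parent c).
Proof.
move=> Hc; apply/idP/orP => [H|[/eqP->|]]; last exact: ancestor_parentr.
  by have [->|Hne] := eqVneq x c; [left | right; apply: ancestor_parent].
exact: ancestor_refl.
Qed.

Lemma ancestor_child y w : ancestor y w -> y != w ->
  exists c, [/\ ancestor c w, parent c = y & dr c = (dr y).+1].
Proof.
move=> Hyw Hne; have Hd := ancestor_dist Hyw.
have Hlt : dr y < dr w.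
  rewrite ltn_neqAle Hd andbT; apply: contra_neq Hne => Ed.
  exact: ancestor_eq Hyw (ancestor_refl w) Ed.
exists (iter (dr w - dr y).-1 parent w); split; first exact: ancestor_iter.
  by move: Hyw => /eqP Hy; rewrite -{2}Hy -iterS prednK // subn_gt0.
by rewrite dist_iter_parent; lia.
Qed.

Lemma grandparent_neq x : x != r -> parent (parent x) != x.
Proof.
move=> Hx; apply/eqP => /(congr1 dr); rewrite !dist_parent.
have : 0 < dr x by rewrite lt0n dr_eq0.
lia.
Qed.

End Root.

Arguments parent : clear implicits.
Arguments ancestor : clear implicits.

Lemma odd_dist_reroot o r x : odd (dist e o x) = odd (dist e o r) (+) odd (dist e r x).
Proof.
move Hn : (dist e r x) => n; elim: n x Hn => [|n IH] x Hn.
  by move/eqP: Hn; rewrite dist_eq0 // => /eqP ->; rewrite addbF.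
have Hx : x != r by rewrite -(dist_eq0 r e_connected) Hn.
rewrite (odd_dist_edge (r := o) (edge_parent Hx)) (IH (parent r x)); last by rewrite dist_parent Hn.
by rewrite addbN.
Qed.

Section Alternating.
Variables (o : T) (K J : {set T}) (v0 : T).
Hypothesis KJ_even : K :|: J = even_vertices e o.
Hypothesis KJ_disjoint : K :&: J = set0.
Hypothesis v0J : v0 \in J.

Local Notation d := (dist e v0).
Local Notation p := (parent v0).
Local Notation anc := (ancestor v0).
Local Notation U := (odd_vertices e o).

Let d_eq0 x : (d x == 0) = (x == v0). Proof. exact: dist_eq0. Qed.
Let d_v0 : d v0 = 0. Proof. exact: dist_root. Qed.

Lemma odd_height x : odd (height e o x) = odd (d x).
Proof.
have : v0 \in even_vertices e o by rewrite -KJ_even in_setU v0J orbT.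
by rewrite in_set /height (odd_dist_reroot o v0 x) => /negbTE ->.
Qed.

Lemma in_odd_vertices x : (x \in U) = odd (d x).
Proof. by rewrite in_set odd_height. Qed.

Lemma in_even_vertices x : (x \in even_vertices e o) = ~~ odd (d x).
Proof. by rewrite in_set odd_height. Qed.

Lemma even_of_J x : x \in J -> ~~ odd (d x).
Proof. by move=> Hx; rewrite -in_even_vertices -KJ_even in_setU Hx orbT. Qed.

Lemma even_of_K x : x \in K -> ~~ odd (d x).
Proof. by move=> Hx; rewrite -in_even_vertices -KJ_even in_setU Hx. Qed.

Lemma J_of_even x : ~~ odd (d x) -> x \notin K -> x \in J.
Proof. by rewrite -in_even_vertices -KJ_even in_setU => /orP[->|]. Qed.

Lemma K_J_neq x y : x \in K -> y \in J -> x != y.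
Proof.
move=> Hx Hy; apply/eqP => Exy.
by have := in_set0 x; rewrite -KJ_disjoint in_setI Hx Exy Hy.
Qed.

Lemma odd_neq_v0 x : odd (d x) -> x != v0.
Proof. by apply: contraTneq => ->; rewrite d_v0. Qed.

Lemma odd_dist_child c : c != v0 -> odd (d c) = ~~ odd (d (p c)).
Proof. by move=> Hc; rewrite (dist_parentS Hc). Qed.

Definition good := [set M : {set T * T} |
  is_matching e M && [forall x in K :|: U, saturates M x]].
Definition good_free := [set M in good | ~~ saturates M v0].

Lemma goodP (M : {set T * T}) :
  reflect (is_matching e M /\ forall x, x \in K :|: U -> saturates M x) (M \in good).
Proof.
rewrite in_set; apply: (iffP andP) => [[H1 /forallP H2]|[H1 H2]]; split => //.
  by move=> x Hx; move: (H2 x); rewrite Hx.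
by apply/forallP => x; apply/implyP; apply: H2.
Qed.

Lemma m_count_good_free : #|good_free| + m_count e o (v0 |: K) = m_count e o K.
Proof.
rewrite addnC [RHS](_ : _ = #|good|) // -(cardsID [set M | saturates M v0] good).
congr (_ + _); last first.
  by apply: eq_card => M; rewrite !in_set andbC.
apply: eq_card => M; rewrite !in_set.
apply/andP/andP => [[Hm /forallP H]|[/andP[Hm /forallP H] Hs]].
  split; last by move: (H v0); rewrite !in_setU in_set1 eqxx.
  rewrite Hm; apply/forallP => x; apply/implyP => Hx; move: (H x).
  by rewrite !in_setU in_set1; move: Hx; rewrite in_setU => /orP[] ->; rewrite ?orbT.
split => //; apply/forallP => x; apply/implyP.
rewrite !in_setU in_set1 -orbA => /orP[/eqP->//|Hx].
by move: (H x); rewrite in_setU Hx.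
Qed.

(* [down_path M v]: every odd vertex on the path from v0 to v is matched by M to
   its child on the path; [up_path M v]: to its parent. *)
Definition all_even_ancestors (P : pred T) v :=
  [forall x, (anc x v && ~~ odd (d x) && (x != v0)) ==> P x].
Definition down_path (M : {set T * T}) := all_even_ancestors (fun x => (p x, x) \in M).
Definition up_path (M : {set T * T}) := all_even_ancestors (fun x => (p x, p (p x)) \in M).

Lemma all_even_ancestorsP (P : pred T) v :
  reflect (forall x, anc x v -> ~~ odd (d x) -> x != v0 -> P x) (all_even_ancestors P v).
Proof.
apply: (iffP forallP) => [H x H1 H2 H3|H x]; first by move: (H x); rewrite H1 H2 H3.
by apply/implyP => /andP[/andP[H1 H2] H3]; apply: H.
Qed.

Lemma all_even_ancestors_v0 (P : pred T) : all_even_ancestors P v0.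
Proof. by apply/all_even_ancestorsP => x /ancestor_rootr ->; rewrite eqxx. Qed.

Lemma all_even_ancestors_anc (P : pred T) x z :
  anc z x -> all_even_ancestors P x -> all_even_ancestors P z.
Proof.
move=> Hz /all_even_ancestorsP H; apply/all_even_ancestorsP => y Hy.
exact/H/(ancestor_trans Hy Hz).
Qed.

Lemma all_even_ancestors_step (P : pred T) c : c != v0 -> ~~ odd (d c) ->
  all_even_ancestors P c = all_even_ancestors P (p (p c)) && P c.
Proof.
move=> Hc He; have Hpc : p c != v0.
  by apply: odd_neq_v0; move: He; rewrite odd_dist_child // negbK.
apply/all_even_ancestorsP/andP => [H|[/all_even_ancestorsP H1 H2] x].
  split; last exact: H c (ancestor_refl c) He Hc.
  apply/all_even_ancestorsP => x Hx; apply: H.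
  exact/ancestor_parentr/ancestor_parentr.
rewrite ancestorE // ancestorE // => /or3P[/eqP->//|/eqP->|Hx] Hxe; last exact: H1.
by move: Hxe; rewrite -(odd_dist_child Hc) (negbTE He).
Qed.

Definition down_set v := [set M in good_free | down_path M v].
Definition up_set v := [set M in good | up_path M v && ~~ saturates M v].

Definition path_edges v := [set q : T * T |
  (anc q.1 v && (q.1 != v0) && (q.2 == p q.1)) ||
  (anc q.2 v && (q.2 != v0) && (q.1 == p q.2))].
Definition flip_path v (M : {set T * T}) := (M :\: path_edges v) :|: (path_edges v :\: M).

Lemma in_flip_path v M q : (q \in flip_path v M) = (q \in M) (+) (q \in path_edges v).
Proof. by rewrite !in_setU !in_setD; case: (q \in M); case: (q \in path_edges v). Qed.

Lemma flip_pathK v : involutive (flip_path v).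
Proof. by move=> M; apply/setP => q; rewrite !in_flip_path -addbA addbb addbF. Qed.

Lemma in_path_edges v y a : ((y, a) \in path_edges v) =
  (anc y v && (y != v0) && (a == p y)) || (anc a v && (a != v0) && (y == p a)).
Proof. by rewrite in_set. Qed.

Lemma path_edges_sym v y a : ((y, a) \in path_edges v) = ((a, y) \in path_edges v).
Proof. by rewrite !in_path_edges orbC. Qed.

Lemma path_edges_anc v y a : (y, a) \in path_edges v -> anc y v.
Proof.
rewrite in_path_edges => /orP[/andP[/andP[->//]]|/andP[/andP[Ha _] /eqP ->]].
exact: ancestor_trans (ancestor_parent_self a) Ha.
Qed.

Lemma path_edges_edge v y a : (y, a) \in path_edges v -> e y a.
Proof.
rewrite in_path_edges => /orP[] /andP[/andP[_ H0] /eqP ->]; first exact: edge_parent.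
by rewrite e_sym; apply: edge_parent.
Qed.

Lemma path_edges_parent v x : anc x v -> x != v0 -> (x, p x) \in path_edges v.
Proof. by move=> H1 H2; rewrite in_path_edges H1 H2 eqxx. Qed.

Section Flip.
Variables (v : T) (M : {set T * T}) (b : bool).
Hypothesis matchingM : is_matching e M.
Hypothesis M_path : forall x, anc x v -> x != v0 -> ((x, p x) \in M) = (odd (d x) == b).
Hypothesis M_local : forall y a, anc y v -> (y, a) \in M -> (y, a) \in path_edges v.

Lemma path_edges_notin y a : (y, a) \in path_edges v -> (y, a) \notin M ->
  (anc y v && (y != v0) && (a == p y) && (odd (d y) != b)) ||
  (anc a v && (a != v0) && (y == p a) && (odd (d a) != b)).
Proof.
rewrite in_path_edges => /orP[] /andP[/andP[H1 H2] /eqP H3] HnM.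
  by rewrite H1 H2 H3 eqxx /= -(M_path H1 H2) -H3 HnM.
apply/orP; right; rewrite H1 H2 H3 eqxx /= -(M_path H1 H2).
by apply: contra HnM => Hin; rewrite H3 (matching_sym matchingM Hin).
Qed.

Lemma flip_path_matching : is_matching e (flip_path v M).
Proof.
apply/is_matchingP; split.
- move=> x y; rewrite in_flip_path; case Hx: ((x, y) \in M) => /=.
    by move=> _; apply: matching_edge Hx.
  exact: path_edges_edge.
- move=> x y; rewrite !in_flip_path path_edges_sym.
  case Hx: ((x, y) \in M); first by rewrite (matching_sym matchingM Hx).
  by case Hy: ((y, x) \in M) => //; rewrite (matching_sym matchingM Hy) in Hx.
- move=> y a c; rewrite !in_flip_path.
  case Ha: ((y, a) \in M); case Hc: ((y, c) \in M) => //=.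
  + by move=> _ _; exact: (matching_uniq matchingM Ha Hc).
  + by move=> Hna HPc; move: Hna; rewrite (M_local (path_edges_anc HPc) Ha).
  + by move=> HPa Hnc; move: Hnc; rewrite (M_local (path_edges_anc HPa) Hc).
  + move=> /path_edges_notin /(_ (negbT Ha)) Ea /path_edges_notin /(_ (negbT Hc)).
    case/orP: Ea => /andP[/andP[/andP[Ha1 Ha2] /eqP Ha3] Ha4];
      case/orP => /andP[/andP[/andP[Hc1 Hc2] /eqP Hc3] Hc4].
    * by rewrite Ha3 Hc3.
    * by move: Ha4 Hc4; rewrite Hc3 (odd_dist_child Hc2); case: (odd (d (p c))); case: b.
    * by move: Ha4 Hc4; rewrite Ha3 (odd_dist_child Ha2); case: (odd (d (p a))); case: b.
    * by apply: ancestor_eq Ha1 Hc1 _; rewrite (dist_parentS Ha2) (dist_parentS Hc2) -Ha3 -Hc3.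
Qed.

Lemma flip_path_off y : ~~ anc y v -> saturates M y -> saturates (flip_path v M) y.
Proof.
move=> Hy /saturatesP[a Ha]; apply/saturatesP; exists a; rewrite in_flip_path Ha.
by case HP: (_ \in path_edges v) => //; rewrite (path_edges_anc HP) in Hy.
Qed.

Lemma flip_path_parent x : anc x v -> x != v0 ->
  ((x, p x) \in flip_path v M) = (odd (d x) != b).
Proof. by move=> H1 H2; rewrite in_flip_path (path_edges_parent H1 H2) addbT M_path. Qed.

Lemma flip_path_saturates x : anc x v ->
  (odd (d x) != b) && (x != v0) || (odd (d x) == b) && (x != v) ->
  saturates (flip_path v M) x.
Proof.
move=> Hx /orP[/andP[H1 H2]|/andP[H1 H2]]; apply/saturatesP.
  by exists (p x); rewrite flip_path_parent.
have [c [Hc1 Hc2 Hc3]] := ancestor_child Hx H2.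
have Hc0 : c != v0 by rewrite -d_eq0 Hc3.
exists c; rewrite -Hc2 in_flip_path path_edges_sym (path_edges_parent Hc1 Hc0) addbT.
apply/negP => /(matching_sym matchingM); rewrite M_path // (odd_dist_child Hc0) Hc2 (eqP H1).
by case: b.
Qed.

End Flip.

Lemma down_setP M v :
  reflect [/\ M \in good, ~~ saturates M v0 & down_path M v] (M \in down_set v).
Proof. by rewrite [_ \in down_set v]in_set [_ \in good_free]in_set -andbA; apply: and3P. Qed.

Lemma up_setP M v :
  reflect [/\ M \in good, up_path M v & ~~ saturates M v] (M \in up_set v).
Proof. by rewrite [_ \in up_set v]in_set; apply: and3P. Qed.

Section FlipBijection.
Variable v : T.
Hypothesis vJ : v \in J.

Let v_even : ~~ odd (d v). Proof. exact: even_of_J. Qed.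

Let odd_neq_v x : odd (d x) -> x != v.
Proof. by apply: contraTneq => ->. Qed.

Lemma down_set_path M : M \in down_set v ->
  forall x, anc x v -> x != v0 -> ((x, p x) \in M) = (odd (d x) == false).
Proof.
case/down_setP => /goodP[HM _] _ /all_even_ancestorsP Ha x Hx Hx0.
case Ho: (odd (d x)) => /=; last by apply: (matching_sym HM); apply: Ha => //; rewrite Ho.
have [c [Hc1 Hc2 Hc3]] := ancestor_child Hx (odd_neq_v Ho).
have Hc0 : c != v0 by rewrite -d_eq0 Hc3.
have /= := Ha c Hc1; rewrite Hc3 /= Ho Hc2 => /(_ isT Hc0) Hxc.
apply/negP => /(matching_uniq HM Hxc) Ec.
by move: Hc3; rewrite Ec dist_parent; lia.
Qed.

Lemma down_set_local M : M \in down_set v ->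
  forall y a, anc y v -> (y, a) \in M -> (y, a) \in path_edges v.
Proof.
move=> HN y a Hy Hya; have /down_setP[/goodP[HM _] Hns _] := HN.
have [Ey|Hy0] := eqVneq y v0.
  by move: Hns; rewrite -Ey => /saturatesP []; exists a.
case Ho: (odd (d y)); last first.
  have := down_set_path HN Hy Hy0; rewrite Ho /= => Hyp.
  by rewrite (matching_uniq HM Hya Hyp) path_edges_parent.
have [c [Hc1 Hc2 Hc3]] := ancestor_child Hy (odd_neq_v Ho).
have Hc0 : c != v0 by rewrite -d_eq0 Hc3.
have := down_set_path HN Hc1 Hc0; rewrite Hc3 /= Ho /= Hc2 => Hyc.
rewrite -(matching_uniq HM (matching_sym HM Hyc) Hya) path_edges_sym -Hc2.
exact: path_edges_parent.
Qed.

Lemma flip_down_up M : M \in down_set v -> flip_path v M \in up_set v.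
Proof.
move=> HN; have /down_setP[/goodP[HM Hsat] Hns _] := HN.
have Hp := down_set_path HN; have Hl := down_set_local HN.
have HF := flip_path_matching HM Hp Hl.
apply/up_setP; split.
- apply/goodP; split => // x Hx.
  have [Hxv|Hxv] := boolP (anc x v); last by apply: flip_path_off; rewrite ?Hsat.
  apply: (flip_path_saturates HM Hp Hxv).
  move: Hx; rewrite in_setU in_odd_vertices => /orP[HK|Hod]; last by rewrite Hod odd_neq_v0.
  by rewrite (negbTE (even_of_K HK)) (K_J_neq HK vJ) orbT.
- apply/all_even_ancestorsP => x Hx He Hx0 /=.
  have Hpo : odd (d (p x)) by move: He; rewrite (odd_dist_child Hx0) negbK.
  rewrite (flip_path_parent Hp _ (odd_neq_v0 Hpo)) ?Hpo //.
  exact: ancestor_trans (ancestor_parent_self x) Hx.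
- apply/saturatesP => -[a]; rewrite in_flip_path.
  case Hva: ((v, a) \in M); first by rewrite (Hl _ _ (ancestor_refl v) Hva).
  move=> /= HP; case/orP: (path_edges_notin HM Hp HP (negbT Hva)).
    by case/andP => _; rewrite (negbTE v_even).
  case/andP => /andP[/andP[H1 H2] /eqP H3] _.
  by move: (ancestor_dist H1); rewrite H3 (dist_parentS H2); lia.
Qed.

Lemma up_set_path M : M \in up_set v ->
  forall x, anc x v -> x != v0 -> ((x, p x) \in M) = (odd (d x) == true).
Proof.
case/up_setP => /goodP[HM _] /all_even_ancestorsP Ha Hns x Hx Hx0.
case Ho: (odd (d x)) => /=.
  have [c [Hc1 Hc2 Hc3]] := ancestor_child Hx (odd_neq_v Ho).
  have Hc0 : c != v0 by rewrite -d_eq0 Hc3.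
  by have /= := Ha c Hc1; rewrite Hc3 /= Ho Hc2 => /(_ isT Hc0).
have /= Hpp := Ha x Hx (negbT Ho) Hx0.
apply/negP => /(matching_sym HM) /(matching_uniq HM) /(_ Hpp) E.
by move: (grandparent_neq Hx0); rewrite -E eqxx.
Qed.

Lemma up_set_local M : M \in up_set v ->
  forall y a, anc y v -> (y, a) \in M -> (y, a) \in path_edges v.
Proof.
move=> HR y a Hy Hya; have /up_setP[/goodP[HM _] _ Hns] := HR.
have [Ey|Hyv] := eqVneq y v.
  by move: Hns; rewrite -Ey => /saturatesP []; exists a.
case Ho: (odd (d y)).
  have := up_set_path HR Hy (odd_neq_v0 Ho); rewrite Ho eqxx => Hyp.
  by rewrite (matching_uniq HM Hya Hyp) path_edges_parent ?odd_neq_v0.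
have [c [Hc1 Hc2 Hc3]] := ancestor_child Hy Hyv.
have Hc0 : c != v0 by rewrite -d_eq0 Hc3.
have := up_set_path HR Hc1 Hc0; rewrite Hc3 /= Ho /= Hc2 => Hyc.
rewrite -(matching_uniq HM (matching_sym HM Hyc) Hya) path_edges_sym -Hc2.
exact: path_edges_parent.
Qed.

Lemma flip_up_down M : M \in up_set v -> flip_path v M \in down_set v.
Proof.
move=> HR; have /up_setP[/goodP[HM Hsat] _ _] := HR.
have Hp := up_set_path HR; have Hl := up_set_local HR.
have HF := flip_path_matching HM Hp Hl.
apply/down_setP; split.
- apply/goodP; split => // x Hx.
  have [Hxv|Hxv] := boolP (anc x v); last by apply: flip_path_off; rewrite ?Hsat.
  apply: (flip_path_saturates HM Hp Hxv).
  move: Hx; rewrite in_setU in_odd_vertices => /orP[HK|Hod]; last by rewrite Hod odd_neq_v.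
  by rewrite (negbTE (even_of_K HK)) (K_J_neq HK v0J).
- apply/saturatesP => -[a]; rewrite in_flip_path.
  case Hva: ((v0, a) \in M); first by rewrite (Hl _ _ (ancestor_root v) Hva).
  move=> /= HP; case/orP: (path_edges_notin HM Hp HP (negbT Hva)).
    by rewrite eqxx !andbF.
  by case/andP => /andP[/andP[_ H2] /eqP H3]; rewrite (dist_parentS H2) -H3 d_v0.
- apply/all_even_ancestorsP => x Hx He Hx0 /=.
  by apply: (matching_sym HF); rewrite (flip_path_parent Hp Hx Hx0) (negbTE He).
Qed.

Lemma card_down_up : #|down_set v| = #|up_set v|.
Proof.
have Hinj : injective (flip_path v) by apply: inv_inj; apply: flip_pathK.
apply/eqP; rewrite eqn_leq; apply/andP; split; rewrite -(card_imset _ Hinj);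
  apply: subset_leq_card; apply/subsetP => _ /imsetP[M HM ->].
  exact: flip_down_up.
exact: flip_up_down.
Qed.

End FlipBijection.

Lemma down_set_sub v : down_set v \subset good_free.
Proof. by apply/subsetP => M; rewrite in_set => /andP[]. Qed.

Lemma up_set_J M v : M \in up_set v -> v \in J.
Proof.
case/up_setP => /goodP[_ Hsat] _ /negP Hns.
by apply: J_of_even; apply/negP => Hv; apply/Hns/Hsat; rewrite in_setU ?in_odd_vertices Hv ?orbT.
Qed.

Lemma dist_grandparent x : x != v0 -> ~~ odd (d x) -> d x = (d (p (p x))).+2.
Proof.
move=> Hx He; have Hpx : p x != v0.
  by apply: odd_neq_v0; move: He; rewrite odd_dist_child // negbK.
by rewrite (dist_parentS Hx) (dist_parentS Hpx).
Qed.

Lemma up_path_partner M v u : is_matching e M -> up_path M v -> ~~ odd (d v) ->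
  (v, u) \in M -> p u = v /\ odd (d u).
Proof.
move=> HM /all_even_ancestorsP Ha He Hvu; have Hev := matching_edge HM Hvu.
have Hpu : p u = v.
  case/orP: (tree_edge_parent (r := v0) Hev) => /eqP E; last by rewrite E.
  have Hv0 : v != v0 by apply: contraTneq Hev => Ev; rewrite E Ev parent_root e_irr.
  have /= H1 := Ha v (ancestor_refl v) He Hv0.
  have H2 : (p v, v) \in M by rewrite -E (matching_sym HM Hvu).
  by move: (grandparent_neq Hv0); rewrite (matching_uniq HM H1 H2) eqxx.
have Hu0 : u != v0 by apply: contraTneq Hev => Eu; rewrite -Hpu Eu parent_root e_irr.
by rewrite (odd_dist_child Hu0) Hpu.
Qed.

Lemma up_path_grandchild M v u c : is_matching e M -> up_path M v -> ~~ odd (d v) ->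
  (v, u) \in M -> p c = u -> [/\ up_path M c, ~~ odd (d c) & d v < d c].
Proof.
move=> HM Hup Hve Hvu Hc; have [Hpu Hu] := up_path_partner HM Hup Hve Hvu.
have Hc0 : c != v0 by apply: contra_neq (odd_neq_v0 Hu) => Ec; rewrite -Hc Ec parent_root.
have Hce : ~~ odd (d c) by rewrite (odd_dist_child Hc0) Hc Hu.
split => //; last by rewrite (dist_grandparent Hc0 Hce) Hc Hpu ltnW.
rewrite /up_path (all_even_ancestors_step _ Hc0 Hce) /= Hc Hpu.
by rewrite [all_even_ancestors _ _]Hup (matching_sym HM Hvu).
Qed.

Lemma down_path_child M u c : M \in good_free -> down_path M (p u) -> odd (d u) ->
  (u, c) \in M -> [/\ p c = u, down_path M c & ~~ odd (d c)].
Proof.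
rewrite in_set => /andP[/goodP[HM _] Hns] Hdown Hu Huc; have Hu0 := odd_neq_v0 Hu.
have Hpe : ~~ odd (d (p u)) by rewrite -odd_dist_child.
have Hc : p c = u.
  case/orP: (tree_edge_parent (r := v0) (matching_edge HM Huc)) => /eqP E; last by rewrite E.
  have Hpu : p u != v0.
    apply: contraNneq Hns => Ep; apply/saturatesP; exists u.
    by rewrite -Ep -E (matching_sym HM Huc).
  have /= H1 := all_even_ancestorsP _ _ Hdown (p u) (ancestor_refl _) Hpe Hpu.
  have H2 : (p u, u) \in M by rewrite -E (matching_sym HM Huc).
  by move: (grandparent_neq Hu0); rewrite (matching_uniq HM (matching_sym HM H1) H2) eqxx.
have Hc0 : c != v0 by apply: contra_neq Hu0 => Ec; rewrite -Hc Ec parent_root.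
have Hce : ~~ odd (d c) by rewrite (odd_dist_child Hc0) Hc Hu.
split => //; rewrite /down_path (all_even_ancestors_step _ Hc0 Hce) /= Hc.
by rewrite [all_even_ancestors _ _]Hdown Huc.
Qed.

Lemma card_down_set_children u : odd (d u) ->
  #|down_set (p u)| = \sum_(c in [set c | p c == u]) #|down_set c|.
Proof.
move=> Hu; have Hu0 := odd_neq_v0 Hu.
rewrite (card_partition_sum (I := [set c | p c == u])
                            (f := fun c (M : {set T * T}) => (u, c) \in M)).
  apply: eq_bigr => c; rewrite in_set => /eqP Hc.
  have Hc0 : c != v0 by apply: contra_neq Hu0 => Ec; rewrite -Hc Ec parent_root.
  have Hce : ~~ odd (d c) by rewrite (odd_dist_child Hc0) Hc Hu.
  apply: eq_card => M; rewrite !in_set /down_path (all_even_ancestors_step _ Hc0 Hce) /= Hc.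
  by rewrite !andbA.
move=> M HN; have /down_setP[/goodP[HM Hsat] _ Hdown] := HN.
have /saturatesP[c Huc] : saturates M u.
  by apply: Hsat; rewrite in_setU in_odd_vertices Hu orbT.
have [Hc _ _] := down_path_child (subsetP (down_set_sub _) _ HN) Hdown Hu Huc.
apply: (@sum_indicator_unique _ _ _ c); first by rewrite in_set Hc.
  by [].
by move=> c' _ Huc'; exact: (matching_uniq HM Huc' Huc).
Qed.

Lemma exists_deepest_even (Q : pred T) : Q v0 ->
  exists2 v, ~~ odd (d v) && Q v & forall c, ~~ odd (d c) -> Q c -> d c <= d v.
Proof.
move=> HQ; have HQ0 : ~~ odd (d v0) && Q v0 by rewrite d_v0.
case: (@arg_maxnP _ v0 (fun x => ~~ odd (d x) && Q x) d HQ0) => v Hv Hmax.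
by exists v => // c Hc HQc; apply: Hmax; rewrite Hc.
Qed.

(* Follow the path on which M' alternates downwards and M upwards as deep as
   possible: its end is left free by M. *)
Lemma good_pair_witness M M' : M \in good -> M' \in good_free ->
  exists2 v, M \in up_set v & M' \in down_set v.
Proof.
move=> HG HG'; have /goodP[HM _] := HG.
have := HG'; rewrite in_set => /andP[/goodP[_ Hsat'] _].
have HQ0 : down_path M' v0 && up_path M v0 by rewrite /down_path /up_path !all_even_ancestors_v0.
have [v /andP[Hve /andP[Hdown Hup]] Hmax] :=
  exists_deepest_even (Q := fun x => down_path M' x && up_path M x) HQ0.
have Hns : ~~ saturates M v.
  apply/saturatesP => -[u Hvu]; have [Hpu Hu] := up_path_partner HM Hup Hve Hvu.
  have /saturatesP[c Huc] : saturates M' u.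
    by apply: Hsat'; rewrite in_setU in_odd_vertices Hu orbT.
  have Hdownu : down_path M' (p u) by rewrite Hpu.
  have [Hc Hdownc _] := down_path_child HG' Hdownu Hu Huc.
  have [Hupc Hce Hlt] := up_path_grandchild HM Hup Hve Hvu Hc.
  by move: (Hmax c Hce); rewrite Hdownc Hupc leqNgt Hlt => /(_ isT).
have HR : M \in up_set v by apply/up_setP.
by exists v => //; rewrite in_set HG' Hdown.
Qed.

Lemma up_down_path_depth_uniq M M' n : is_matching e M -> is_matching e M' ->
  forall x y, d x = n -> d y = n -> ~~ odd n ->
  down_path M' x -> up_path M x -> down_path M' y -> up_path M y -> x = y.
Proof.
move=> HM HM'; elim/ltn_ind: n => n IH x y Hx Hy Hn Hxd Hxu Hyd Hyu.
have [Ex|Hx0] := eqVneq x v0.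
  by rewrite Ex; apply/esym/eqP; rewrite -d_eq0 Hy -Hx Ex d_v0.
have Hy0 : y != v0 by rewrite -d_eq0 Hy -Hx d_eq0.
have Hxe : ~~ odd (d x) by rewrite Hx.
have Hye : ~~ odd (d y) by rewrite Hy.
move: Hxd Hxu Hyd Hyu; rewrite /down_path /up_path.
rewrite !(all_even_ancestors_step _ Hx0) // !(all_even_ancestors_step _ Hy0) //=.
move=> /andP[Hxd Hx1] /andP[Hxu Hx2] /andP[Hyd Hy1] /andP[Hyu Hy2].
have Egp : p (p x) = p (p y).
  have Edx := dist_grandparent Hx0 Hxe; have Edy := dist_grandparent Hy0 Hye.
  apply: (IH (d (p (p x)))) => //; first by rewrite -Hx Edx.
  - by move: Edx Edy; rewrite Hx Hy => -> /eqP; rewrite !eqSS => /eqP.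
  - by move: Hxe; rewrite Edx /= negbK.
rewrite Egp in Hx2; have Ep := matching_uniqr HM Hx2 Hy2.
by rewrite Ep in Hx1; exact: (matching_uniq HM' Hx1 Hy1).
Qed.

Lemma good_pair_unique M M' v w : M \in up_set v -> M' \in down_set v ->
  M \in up_set w -> M' \in down_set w -> v = w.
Proof.
wlog Hle : v w / d v <= d w => [Hwlog HRv HNv HRw HNw|].
  have [H|/ltnW H] := leqP (d v) (d w); first exact: Hwlog H HRv HNv HRw HNw.
  by rewrite (Hwlog _ _ H HRw HNw HRv HNv).
move=> HRv HNv HRw HNw.
have Hve := even_of_J (up_set_J HRv); have Hwe := even_of_J (up_set_J HRw).
have /up_setP[/goodP[HM _] Hvu Hvn] := HRv; have /down_setP[/goodP[HM' _] _ Hvd] := HNv.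
have /up_setP[_ Hwu _] := HRw; have /down_setP[_ _ Hwd] := HNw.
pose w' := iter (d w - d v) p w.
have Hw'w : anc w' w by apply: ancestor_iter.
have Ew' : w' = v.
  have Hdw' : d w' = d v by rewrite dist_iter_parent subKn.
  apply: (up_down_path_depth_uniq HM HM' Hdw' erefl Hve) => //.
    exact: all_even_ancestors_anc Hw'w Hwd.
  exact: all_even_ancestors_anc Hw'w Hwu.
(* Otherwise up_path M w matches v to the next vertex on the path to w. *)
rewrite {}Ew' in Hw'w; apply/eqP; apply: contraNT Hvn => Hne.
have [c1 [Hc1 Hc1p Hc1d]] := ancestor_child Hw'w Hne.
have Hc1o : odd (d c1) by rewrite Hc1d /= Hve.
have Hc1w : c1 != w by apply: contraTneq Hc1o => ->.
have [c2 [Hc2 Hc2p Hc2d]] := ancestor_child Hc1 Hc1w.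
have Hc20 : c2 != v0 by rewrite -d_eq0 Hc2d.
have Hc2e : ~~ odd (d c2) by rewrite Hc2d /= Hc1o.
have /= := all_even_ancestorsP _ _ Hwu c2 Hc2 Hc2e Hc20; rewrite Hc2p Hc1p => H.
by apply/saturatesP; exists c1; exact: (matching_sym HM H).
Qed.

Lemma card_good_pairs : #|good| * #|good_free| = \sum_(v in J) #|down_set v| ^ 2.
Proof.
rewrite -cardsX (card_partition_sum (I := J)
  (f := fun v (q : {set T * T} * {set T * T}) => (q.1 \in up_set v) && (q.2 \in down_set v))).
  apply: eq_bigr => v Hv; rewrite expnS expn1 {1}(card_down_up Hv) -cardsX.
  apply: eq_card => -[M M']; rewrite in_set !in_setX /=.
  case HR: (M \in up_set v); case HN: (M' \in down_set v); rewrite ?andbF //=.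
  by case/up_setP: HR => -> _ _; rewrite (subsetP (down_set_sub v) _ HN).
move=> [M M']; rewrite in_setX => /andP[HG HG'].
have [v HR HN] := good_pair_witness HG HG'.
apply: (@sum_indicator_unique _ _ _ v); [exact: up_set_J HR | by rewrite /= HR HN |].
by move=> w _ /andP[HR' HN']; apply: good_pair_unique HR' HN' HR HN.
Qed.

Lemma exists_child u : 1 < degree e u -> exists c, p c = u.
Proof.
move=> Hdeg; have : 0 < #|[set w | e u w] :\ p u|.
  move: (cardsD1 (p u) [set w | e u w]) (leq_b1 (p u \in [set w | e u w])).
  rewrite -/(degree e u); lia.
rewrite card_gt0 => /set0Pn[c]; rewrite in_setD1 in_set => /andP[Hcp Huc].
exists c; case/orP: (tree_edge_parent (r := v0) Huc) => /eqP E; last by rewrite E.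
by rewrite E eqxx in Hcp.
Qed.

Lemma good_free_gt0 k : 0 < k -> (forall u, u \in U -> degree e u = k.+1) ->
  0 < #|good| -> 0 < #|good_free|.
Proof.
move=> Hk Hdeg; rewrite !card_gt0 => /set0Pn[M HG]; have /goodP[HM _] := HG.
have [v /andP[Hve Hup] Hmax] := exists_deepest_even (Q := up_path M) (all_even_ancestors_v0 _).
have Hns : ~~ saturates M v.
  apply/saturatesP => -[u Hvu]; have [Hpu Hu] := up_path_partner HM Hup Hve Hvu.
  have [c Hc] : exists c, p c = u by apply: exists_child; rewrite Hdeg ?in_odd_vertices.
  have [Hupc Hce Hlt] := up_path_grandchild HM Hup Hve Hvu Hc.
  by move: (Hmax c Hce Hupc); rewrite leqNgt Hlt.
have HR : M \in up_set v by apply/up_setP.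
apply/set0Pn; exists (flip_path v M).
exact: subsetP (down_set_sub v) _ (flip_up_down (up_set_J HR) HR).
Qed.

Section Potential.
Variables (R : realType) (D : T -> T -> R).

Local Open Scope ring_scope.

Hypothesis D_incidence : forall v u, v \in even_vertices e o -> u \in U ->
  if e v u then D v u = 1 \/ D v u = -1 else D v u = 0.

(* [path_sign] is chosen so that [path_sign c * D c u = - path_sign (p u) * D (p u) u]
   for every child c of an odd vertex u; the fuel #|T| exceeds every depth. *)
Fixpoint sign_fuel (n : nat) (x : T) : R :=
  if n is n'.+1 then
    if x == v0 then 1 else - sign_fuel n' (p (p x)) * D (p (p x)) (p x) * D x (p x)
  else 1.

Definition path_sign x := sign_fuel #|T| x.

Lemma sign_fuel_v0 n : sign_fuel n v0 = 1.
Proof. by case: n => //= n; rewrite eqxx. Qed.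

Lemma sign_fuel_enough n m x : (d x <= n)%N -> (d x <= m)%N -> sign_fuel n x = sign_fuel m x.
Proof.
elim: n m x => [|n IH] m x Hn Hm.
  by move: Hn; rewrite leqn0 d_eq0 => /eqP ->; rewrite !sign_fuel_v0.
case: m Hm => [|m] Hm.
  by move: Hm; rewrite leqn0 d_eq0 => /eqP ->; rewrite !sign_fuel_v0.
rewrite /=; case: (eqVneq x v0) => // Hx; congr (- _ * _ * _).
by apply: IH; rewrite !dist_parent; move: Hn Hm; rewrite (dist_parentS Hx); lia.
Qed.

Lemma path_sign_v0 : path_sign v0 = 1.
Proof. exact: sign_fuel_v0. Qed.

Lemma path_signE x : x != v0 ->
  path_sign x = - path_sign (p (p x)) * D (p (p x)) (p x) * D x (p x).
Proof.
move=> Hx; rewrite /path_sign; have := dist_lt_card v0 e_connected x.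
case: #|T| => [//|n] Hlt; rewrite [sign_fuel n.+1 x]/= (negbTE Hx).
by congr (- _ * _ * _); apply: sign_fuel_enough; rewrite !dist_parent; lia.
Qed.

Lemma D_sqr v u : ~~ odd (d v) -> odd (d u) -> e v u -> D v u ^+ 2 = 1.
Proof.
move=> Hv Hu Hvu; have := D_incidence (v := v) (u := u).
rewrite in_even_vertices in_odd_vertices Hv Hu Hvu => /(_ isT isT).
by case=> ->; rewrite ?sqrrN expr1n.
Qed.

Lemma path_sign_sqr x : ~~ odd (d x) -> path_sign x ^+ 2 = 1.
Proof.
move Hn : (d x) => n; elim/ltn_ind: n x Hn => n IH x Hn He; rewrite -Hn in He.
have [->|Hx] := eqVneq x v0; first by rewrite path_sign_v0 expr1n.
have Hpx : odd (d (p x)) by move: He; rewrite (odd_dist_child Hx) negbK.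
have Hpx0 := odd_neq_v0 Hpx.
have Edx := dist_grandparent Hx He.
have Hgpe : ~~ odd (d (p (p x))) by rewrite -(odd_dist_child Hpx0).
rewrite path_signE // !exprMn sqrrN (IH (d (p (p x)))) -?Hn ?Edx //.
rewrite (D_sqr Hgpe Hpx) ?(D_sqr He Hpx (edge_parent Hx)) ?mulr1 //.
by rewrite e_sym edge_parent.
Qed.

Lemma sum_incident (F : T -> R) u : odd (d u) ->
  \sum_(v in even_vertices e o) F v * D v u =
    F (p u) * D (p u) u + \sum_(c | p c == u) F c * D c u.
Proof.
move=> Hu; have Hu0 := odd_neq_v0 Hu.
have Hpe : p u \in even_vertices e o by rewrite in_even_vertices -odd_dist_child.
have Hpp := grandparent_neq Hu0.
rewrite (bigD1 (p u)) //=; congr (_ + _); rewrite big_mkcond [RHS]big_mkcond.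
apply: eq_bigr => v _; case: (eqVneq (p v) u) => [Hpv|Hpv].
  have Hv0 : v != v0 by apply: contra_neq Hu0 => Ev; rewrite -Hpv Ev parent_root.
  have Hvpu : v != p u by apply: contra_neq Hpp => <-.
  by rewrite in_even_vertices (odd_dist_child Hv0) Hpv Hu Hvpu.
case: ifP => // /andP[Hve Hvp].
have := D_incidence Hve (u := u); rewrite in_odd_vertices Hu => /(_ isT).
case Hvu: (e v u); last by move=> ->; rewrite mulr0.
by case/orP: (tree_edge_parent (r := v0) Hvu) => /eqP E; rewrite E eqxx in Hvp Hpv.
Qed.

Definition potential v : R := path_sign v * #|down_set v|%:R / #|good_free|%:R.

Lemma potential_v0 : (0 < #|good_free|)%N -> potential v0 = 1.
Proof.
move=> H; rewrite /potential path_sign_v0 mul1r.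
have -> : down_set v0 = good_free.
  by apply/setP => M; rewrite in_set [down_path _ _]all_even_ancestors_v0 andbT.
by rewrite divff // pnatr_eq0 -lt0n.
Qed.

Lemma sum_potential_sqr : (0 < #|good_free|)%N ->
  \sum_(v in J) potential v ^+ 2 = #|good|%:R / #|good_free|%:R.
Proof.
move=> H; have HZ : #|good_free|%:R != 0 :> R by rewrite pnatr_eq0 -lt0n.
rewrite (eq_bigr (fun v => (#|down_set v| ^ 2)%:R / #|good_free|%:R ^+ 2)); last first.
  move=> v Hv; rewrite /potential !exprMn (path_sign_sqr (even_of_J Hv)) mul1r exprVn.
  by rewrite natrX.
rewrite -mulr_suml -natr_sum -card_good_pairs natrM.
by field.
Qed.

Lemma potential_balanced u : u \in U ->
  \sum_(v in even_vertices e o) potential v * D v u = 0.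
Proof.
rewrite in_odd_vertices => Hu; have Hu0 := odd_neq_v0 Hu.
rewrite sum_incident // (eq_bigr (fun c =>
  - (path_sign (p u) * D (p u) u / #|good_free|%:R) * #|down_set c|%:R)); last first.
  move=> c /eqP Hc.
  have Hc0 : c != v0 by apply: contra_neq Hu0 => Ec; rewrite -Hc Ec parent_root.
  have Hce : ~~ odd (d c) by rewrite (odd_dist_child Hc0) Hc Hu.
  have Hsq : D c u ^+ 2 = 1 by apply: D_sqr => //; rewrite -Hc edge_parent.
  by rewrite /potential (path_signE Hc0) Hc -[RHS]mulr1 -Hsq; ring.
rewrite -mulr_sumr -natr_sum.
have -> : (\sum_(c | p c == u) #|down_set c|)%N = #|down_set (p u)|.
  by rewrite (card_down_set_children Hu); apply: eq_bigl => c; rewrite in_set.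
by rewrite /potential; ring.
Qed.

End Potential.
End Alternating.
End Tree.

Unset Implicit Arguments.
Local Open Scope ring_scope.

Theorem claim2p11 (R : realType) (T : finType) (e : rel T) (o : T) (k : nat)
  (D : T -> T -> R) (K J : {set T}) (v0 : T) :
  (1 <= k)%N ->
  is_tree e -> valid e k o ->
  (forall v u, v \in even_vertices e o -> u \in odd_vertices e o ->
     if e v u then (D v u = 1 \/ D v u = -1) else D v u = 0) ->
  K :|: J = even_vertices e o -> K :&: J = set0 ->
  (0 < m_count e o K)%N ->
  v0 \in J ->
  exists phi : T -> R,
    (forall u, u \in odd_vertices e o ->
       \sum_(v in even_vertices e o) phi v * D v u = 0) /\
    phi v0 = 1 /\
    \sum_(v in J) phi v ^+ 2 =
      (m_count e o K)%:R / ((m_count e o K)%:R - (m_count e o (v0 |: K))%:R).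
Proof.
move=> Hk Htree [_ Hdeg] HD HKJ HKJ0 Hm Hv0.
have Hfree := good_free_gt0 Htree HKJ HKJ0 Hv0 Hk Hdeg Hm.
exists (potential e o K v0 D); split; last split.
- exact: (potential_balanced Htree HKJ Hv0 HD).
- exact: (potential_v0 Htree D Hfree).
- have -> : (m_count e o K)%:R - (m_count e o (v0 |: K))%:R = #|good_free e o K v0|%:R :> R.
    by rewrite -(m_count_good_free e o K v0) natrD addrK.
  exact: (sum_potential_sqr Htree HKJ HKJ0 Hv0 HD Hfree).
Qed.
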